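(* Let $U\colon[0,1]^2\to[0,1]$ be a uninorm with neutral element $e\in(0,1)$. Define $U^*,U_*\colon[0,1]^2\to[0,1]$ by $U^*(x,y)=1$ if $\max(x,y)=1$, $U^*(x,y)=0$ if $\min(x,y)=0$ and $\max(x,y)<1$, and $U^*(x,y)=U(x,y)$ otherwise; and $U_*(x,y)=0$ if $\min(x,y)=0$, $U_*(x,y)=1$ if $\min(x,y)>0$ and $\max(x,y)=1$, and $U_*(x,y)=U(x,y)$ otherwise. Then $U^*$ and $U_*$ are both uninorms if and only if there are no $x_1,x_2\in(0,1)$ with $U(x_1,x_2)\in\{0,1\}$.
   Context: A uninorm is a binary operation on $[0,1]$ that is commutative, associative, non-decreasing in each variable and has a neutral element $e$. *)

From Stdlib Require Import Reals.
Open Scope R_scope.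

Definition in01 (x : R) : Prop := 0 <= x <= 1.

(* A binary operation on [0,1] is modelled as F : R -> R -> R; only its
   values on [0,1]^2 matter. *)
Definition is_uninorm (F : R -> R -> R) (e : R) : Prop :=
  in01 e /\
  (forall x y, in01 x -> in01 y -> in01 (F x y)) /\
  (forall x y, in01 x -> in01 y -> F x y = F y x) /\
  (forall x y z, in01 x -> in01 y -> in01 z -> F x (F y z) = F (F x y) z) /\
  (forall x y z, in01 x -> in01 y -> in01 z -> y <= z -> F x y <= F x z) /\
  (forall x, in01 x -> F e x = x).

Definition upper_mod (U : R -> R -> R) (x y : R) : R :=
  if Req_EM_T (Rmax x y) 1 then 1
  else if Req_EM_T (Rmin x y) 0 then 0
  else U x y.

Definition lower_mod (U : R -> R -> R) (x y : R) : R :=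
  if Req_EM_T (Rmin x y) 0 then 0
  else if Req_EM_T (Rmax x y) 1 then 1
  else U x y.

(* If U(x1,x2) = 0 for interior x1, x2, associativity of U_* fails at
   (x1, x2, 1): U_*(x1, U_*(x2, 1)) = 1 but U_*(U_*(x1, x2), 1) = U_*(0, 1) = 0;
   symmetrically, U(x1,x2) = 1 breaks associativity of U^* at (x1, x2, 0).
   Conversely, if U maps (0,1)^2 into (0,1), then in U^* the element 1 is
   absorbing and 0 is absorbing on [0,1), so every uninorm axiom either holds
   for these boundary reasons or reduces to the same axiom for U on interior
   arguments.  U_* needs no separate treatment: it is the dual
   (x,y) |-> 1 - F(1-x, 1-y) of F = V^*, where V is the dual of U. *)

From Stdlib Require Import Reals Lra.
Open Scope R_scope.

Ltac destruct_minmax_tests :=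
  repeat match goal with
  | |- context [Rle_dec ?a ?b] => destruct (Rle_dec a b)
  | |- context [Req_EM_T ?a ?b] => destruct (Req_EM_T a b)
  end.

Definition dual_op (F : R -> R -> R) (x y : R) : R := 1 - F (1 - x) (1 - y).

Lemma is_uninorm_ext (F G : R -> R -> R) (e : R) :
  (forall x y, in01 x -> in01 y -> F x y = G x y) ->
  is_uninorm F e -> is_uninorm G e.
Proof.
  intros HFG [He [Hrange [Hcomm [Hassoc [Hmono Hneu]]]]].
  repeat split; try apply He; intros.
  - rewrite <- HFG by assumption. now apply Hrange.
  - rewrite <- HFG by assumption. now apply Hrange.
  - rewrite <- !HFG by assumption. now apply Hcomm.
  - rewrite <- (HFG y z), <- (HFG x y), <- HFG, <- HFG by (auto; now apply Hrange).
    now apply Hassoc.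
  - rewrite <- !HFG by assumption. now apply Hmono.
  - rewrite <- HFG by assumption. now apply Hneu.
Qed.

Lemma is_uninorm_dual (F : R -> R -> R) (e : R) :
  is_uninorm F e -> is_uninorm (dual_op F) (1 - e).
Proof.
  intros [He [Hrange [Hcomm [Hassoc [Hmono Hneu]]]]].
  unfold is_uninorm, dual_op; unfold in01 in *.
  repeat split; try lra; intros.
  - assert (0 <= F (1 - x) (1 - y) <= 1) by (apply Hrange; lra). lra.
  - assert (0 <= F (1 - x) (1 - y) <= 1) by (apply Hrange; lra). lra.
  - rewrite Hcomm by lra. reflexivity.
  - replace (1 - (1 - F (1 - y) (1 - z))) with (F (1 - y) (1 - z)) by ring.
    replace (1 - (1 - F (1 - x) (1 - y))) with (F (1 - x) (1 - y)) by ring.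
    rewrite Hassoc by lra. reflexivity.
  - assert (F (1 - x) (1 - z) <= F (1 - x) (1 - y)) by (apply Hmono; lra).
    lra.
  - replace (1 - (1 - e)) with e by ring.
    rewrite Hneu by lra. ring.
Qed.

Lemma dual_op_involutive (F : R -> R -> R) (x y : R) :
  dual_op (dual_op F) x y = F x y.
Proof.
  unfold dual_op.
  replace (1 - (1 - x)) with x by ring.
  replace (1 - (1 - y)) with y by ring.
  ring.
Qed.

Lemma lower_mod_dual (U : R -> R -> R) (x y : R) :
  lower_mod U x y = dual_op (upper_mod (dual_op U)) x y.
Proof.
  unfold lower_mod, upper_mod, dual_op, Rmax, Rmin.
  replace (1 - (1 - x)) with x by ring.
  replace (1 - (1 - y)) with y by ring.
  destruct_minmax_tests; lra.
Qed.

Section UpperModification.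

Variables (U : R -> R -> R) (e : R).

Ltac unfold_upper_mod := unfold upper_mod, Rmax, Rmin; destruct_minmax_tests; lra.

Lemma upper_mod_1l y : in01 y -> upper_mod U 1 y = 1.
Proof. unfold in01; intros; unfold_upper_mod. Qed.

Lemma upper_mod_1r x : in01 x -> upper_mod U x 1 = 1.
Proof. unfold in01; intros; unfold_upper_mod. Qed.

Lemma upper_mod_0l y : 0 <= y < 1 -> upper_mod U 0 y = 0.
Proof. intros; unfold_upper_mod. Qed.

Lemma upper_mod_0r x : 0 <= x < 1 -> upper_mod U x 0 = 0.
Proof. intros; unfold_upper_mod. Qed.

Lemma upper_mod_interior x y :
  0 < x < 1 -> 0 < y < 1 -> upper_mod U x y = U x y.
Proof. intros; unfold_upper_mod. Qed.

Lemma upper_mod_uninorm_interior_ne1 e1 x y :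
  is_uninorm (upper_mod U) e1 -> 0 < x < 1 -> 0 < y < 1 -> U x y <> 1.
Proof.
  intros [_ [_ [_ [Hassoc _]]]] hx hy Hxy.
  unfold in01 in Hassoc.
  specialize (Hassoc x y 0 ltac:(lra) ltac:(lra) ltac:(lra)).
  rewrite (upper_mod_0r y), (upper_mod_0r x), (upper_mod_interior x y), Hxy,
    upper_mod_1l in Hassoc by (unfold in01; lra).
  lra.
Qed.

Hypothesis HU : is_uninorm U e.
Hypothesis He : 0 < e < 1.
Hypothesis Hclosed : forall x y, 0 < x < 1 -> 0 < y < 1 -> 0 < U x y < 1.

Lemma upper_mod_lt1 x y :
  0 <= x < 1 -> 0 <= y < 1 -> 0 <= upper_mod U x y < 1.
Proof.
  intros hx hy.
  destruct (Req_dec x 0) as [->|]; [rewrite upper_mod_0l by lra; lra|].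
  destruct (Req_dec y 0) as [->|]; [rewrite upper_mod_0r by lra; lra|].
  rewrite upper_mod_interior by lra.
  assert (0 < U x y < 1) by (apply Hclosed; lra). lra.
Qed.

Lemma upper_mod_in01 x y : in01 x -> in01 y -> in01 (upper_mod U x y).
Proof.
  unfold in01; intros hx hy.
  destruct (Req_dec x 1) as [->|]; [rewrite upper_mod_1l by (red; lra); lra|].
  destruct (Req_dec y 1) as [->|]; [rewrite upper_mod_1r by (red; lra); lra|].
  assert (0 <= upper_mod U x y < 1) by (apply upper_mod_lt1; lra). lra.
Qed.

Lemma upper_mod_comm x y :
  in01 x -> in01 y -> upper_mod U x y = upper_mod U y x.
Proof.
  destruct HU as [_ [_ [Hcomm _]]].
  intros hx hy; unfold upper_mod.
  rewrite Rmax_comm, Rmin_comm.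
  destruct (Req_EM_T (Rmax y x) 1), (Req_EM_T (Rmin y x) 0); auto.
Qed.

Lemma upper_mod_neutral x : in01 x -> upper_mod U e x = x.
Proof.
  destruct HU as [_ [_ [_ [_ [_ Hneu]]]]].
  unfold in01; intros hx.
  destruct (Req_dec x 1) as [->|]; [apply upper_mod_1r; red; lra|].
  destruct (Req_dec x 0) as [->|]; [apply upper_mod_0r; lra|].
  rewrite upper_mod_interior by lra. apply Hneu. red; lra.
Qed.

Lemma upper_mod_mono x y z :
  in01 x -> in01 y -> in01 z -> y <= z -> upper_mod U x y <= upper_mod U x z.
Proof.
  destruct HU as [_ [_ [_ [_ [Hmono _]]]]].
  intros hx hy hz Hyz.
  assert (in01 (upper_mod U x y)) as [_ Hle1] by now apply upper_mod_in01.
  assert (in01 (upper_mod U x z)) as [Hge0 _] by now apply upper_mod_in01.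
  red in hx, hy, hz.
  destruct (Req_dec z 1) as [->|]; [rewrite upper_mod_1r by (red; lra); lra|].
  destruct (Req_dec x 1) as [->|]; [rewrite !upper_mod_1l by (red; lra); lra|].
  destruct (Req_dec y 0) as [->|]; [rewrite upper_mod_0r by lra; lra|].
  destruct (Req_dec x 0) as [->|]; [rewrite !upper_mod_0l by lra; lra|].
  rewrite !upper_mod_interior by lra.
  apply Hmono; red; lra.
Qed.

Lemma upper_mod_assoc x y z :
  in01 x -> in01 y -> in01 z ->
  upper_mod U x (upper_mod U y z) = upper_mod U (upper_mod U x y) z.
Proof.
  destruct HU as [_ [_ [_ [Hassoc _]]]].
  intros hx hy hz.
  assert (in01 (upper_mod U x y)) by now apply upper_mod_in01.
  assert (in01 (upper_mod U y z)) by now apply upper_mod_in01.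
  red in hx, hy, hz.
  destruct (Req_dec x 1) as [->|].
  { rewrite !upper_mod_1l by (auto; red; lra). reflexivity. }
  destruct (Req_dec z 1) as [->|].
  { rewrite !upper_mod_1r by (auto; red; lra). reflexivity. }
  destruct (Req_dec y 1) as [->|].
  { rewrite upper_mod_1l, upper_mod_1r, upper_mod_1l by (red; lra).
    reflexivity. }
  assert (0 <= upper_mod U x y < 1) by (apply upper_mod_lt1; lra).
  assert (0 <= upper_mod U y z < 1) by (apply upper_mod_lt1; lra).
  destruct (Req_dec x 0) as [->|].
  { rewrite !upper_mod_0l by lra. reflexivity. }
  destruct (Req_dec z 0) as [->|].
  { rewrite !upper_mod_0r by lra. reflexivity. }
  destruct (Req_dec y 0) as [->|].
  { rewrite upper_mod_0l, upper_mod_0r, upper_mod_0l by lra. reflexivity. }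
  assert (0 < U x y < 1) by (apply Hclosed; lra).
  assert (0 < U y z < 1) by (apply Hclosed; lra).
  rewrite (upper_mod_interior x y), (upper_mod_interior y z),
    !upper_mod_interior by lra.
  apply Hassoc; red; lra.
Qed.

Lemma upper_mod_is_uninorm : is_uninorm (upper_mod U) e.
Proof.
  repeat split; try lra.
  - apply upper_mod_in01; assumption.
  - apply upper_mod_in01; assumption.
  - apply upper_mod_comm; assumption.
  - apply upper_mod_assoc; assumption.
  - apply upper_mod_mono; assumption.
  - apply upper_mod_neutral.
Qed.

End UpperModification.

Lemma lower_mod_uninorm_interior_ne0 (U : R -> R -> R) e2 x y :
  is_uninorm (lower_mod U) e2 -> 0 < x < 1 -> 0 < y < 1 -> U x y <> 0.
Proof.
  intros Hlower hx hy Hxy.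
  assert (Hupper : is_uninorm (upper_mod (dual_op U)) (1 - e2)).
  { apply (is_uninorm_ext (dual_op (lower_mod U))).
    - intros a b _ _. unfold dual_op at 1. rewrite lower_mod_dual.
      exact (dual_op_involutive _ a b).
    - now apply is_uninorm_dual. }
  apply (upper_mod_uninorm_interior_ne1 _ _ (1 - x) (1 - y) Hupper); try lra.
  unfold dual_op.
  replace (1 - (1 - x)) with x by ring.
  replace (1 - (1 - y)) with y by ring.
  lra.
Qed.

Lemma lower_mod_is_uninorm (U : R -> R -> R) (e : R) :
  is_uninorm U e -> 0 < e < 1 ->
  (forall x y, 0 < x < 1 -> 0 < y < 1 -> 0 < U x y < 1) ->
  is_uninorm (lower_mod U) e.
Proof.
  intros HU He Hclosed.
  apply (is_uninorm_ext (dual_op (upper_mod (dual_op U)))).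
  { intros x y _ _. symmetry. apply lower_mod_dual. }
  replace e with (1 - (1 - e)) by ring.
  apply is_uninorm_dual, upper_mod_is_uninorm.
  - now apply is_uninorm_dual.
  - lra.
  - intros x y hx hy. unfold dual_op.
    assert (0 < U (1 - x) (1 - y) < 1) by (apply Hclosed; lra). lra.
Qed.

Theorem lemma2 (U : R -> R -> R) (e : R) :
  is_uninorm U e -> 0 < e < 1 ->
  ((exists e1, is_uninorm (upper_mod U) e1) /\ (exists e2, is_uninorm (lower_mod U) e2)
   <->
   ~ (exists x1 x2, 0 < x1 < 1 /\ 0 < x2 < 1 /\ (U x1 x2 = 0 \/ U x1 x2 = 1))).
Proof.
  intros HU He. split.
  - intros [[e1 Hupper] [e2 Hlower]] [x1 [x2 [h1 [h2 [Hzero | Hone]]]]].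
    + exact (lower_mod_uninorm_interior_ne0 U e2 x1 x2 Hlower h1 h2 Hzero).
    + exact (upper_mod_uninorm_interior_ne1 U e1 x1 x2 Hupper h1 h2 Hone).
  - intros Hnone.
    assert (Hclosed : forall x y, 0 < x < 1 -> 0 < y < 1 -> 0 < U x y < 1).
    { intros x y hx hy.
      destruct HU as [_ [Hrange _]].
      assert (in01 (U x y)) as [] by (apply Hrange; red; lra).
      destruct (Req_dec (U x y) 0); [exfalso; apply Hnone; eauto 6|].
      destruct (Req_dec (U x y) 1); [exfalso; apply Hnone; eauto 6|].
      lra. }
    split; exists e.
    + now apply upper_mod_is_uninorm.
    + now apply lower_mod_is_uninorm.
Qed.
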